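(* Let $K$ be a valued field, $d\ge1$, and $C\subseteq K^d$ convex. Then $C$ is an open subset of its affine span $\operatorname{aff}(C)$ (with the subspace topology induced by the valuation topology on $K^d$). Consequently, every convex subset of $K^d$ is closed in $K^d$.
   Context: $K$ is a field with a valuation $\nu:K\to\Gamma\cup\{\infty\}$, valuation ring $\mathcal{O}$. A set $X\subseteq K^d$ is convex if it is closed under combinations $\sum_{i=1}^n\alpha_ix_i$ with $x_i\in X$, $\alpha_i\in\mathcal{O}$, $\sum\alpha_i=1$. On $K^d$ put $\nu(x_1,\dots,x_d)=\min_i\nu(x_i)$; the valuation topology on $K^d$ has as basis the balls $\{x:\nu(x-c)>r\}$ ($c\in K^d$, $r\in\Gamma$), equivalently it is the product topology of the valuation topology on $K$. The affine span $\operatorname{aff}(X)$ is $\{\sum_{i=1}^n\alpha_ix_i: x_i\in X,\alpha_i\in K,\sum\alpha_i=1\}$. *)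

From mathcomp Require Import all_boot all_order all_algebra.
Set Implicit Arguments. Unset Strict Implicit. Unset Printing Implicit Defensive.
Import GRing.Theory.
Local Open Scope ring_scope.

(* Value group Gamma: an abelian group (zmodType) with a strict total order
   [lt] compatible with addition.  The element [None : option Gamma] plays
   the role of infinity. *)
Record ordered_group (G : zmodType) (lt : rel G) : Prop := {
  og_irr : forall x, ~~ lt x x;
  og_trans : forall x y z, lt x y -> lt y z -> lt x z;
  og_total : forall x y, [\/ lt x y, x = y | lt y x];
  og_add : forall x y z, lt x y -> lt (x + z) (y + z)
}.

Definition leo (G : zmodType) (lt : rel G) (a b : option G) : bool :=
  match a, b with
  | _, None => true
  | None, Some _ => false
  | Some x, Some y => (x == y) || lt x y
  end.

Definition ltv (G : zmodType) (lt : rel G) (r : G) (a : option G) : bool :=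
  match a with None => true | Some y => lt r y end.

Definition oadd (G : zmodType) (a b : option G) : option G :=
  match a, b with Some x, Some y => Some (x + y) | _, _ => None end.

Record valuation (K : fieldType) (G : zmodType) (lt : rel G)
    (nu : K -> option G) : Prop := {
  val_group : ordered_group lt;
  val_inf : forall x, nu x = None <-> x = 0;
  val_mul : forall x y, nu (x * y) = oadd (nu x) (nu y);
  val_add : forall x y, leo lt (nu x) (nu (x + y)) || leo lt (nu y) (nu (x + y))
}.

Definition vring (K : fieldType) (G : zmodType) (lt : rel G)
    (nu : K -> option G) (a : K) : Prop := leo lt (Some 0) (nu a).

Definition vconvex (K : fieldType) (G : zmodType) (lt : rel G)
    (nu : K -> option G) (d : nat) (X : 'rV[K]_d -> Prop) : Prop :=
  forall (n : nat) (x : 'I_n -> 'rV[K]_d) (a : 'I_n -> K),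
    (forall i, X (x i)) -> (forall i, vring lt nu (a i)) ->
    \sum_(i < n) a i = 1 -> X (\sum_(i < n) a i *: x i).

Definition aff (K : fieldType) (d : nat) (X : 'rV[K]_d -> Prop) (y : 'rV[K]_d) : Prop :=
  exists (n : nat) (x : 'I_n -> 'rV[K]_d) (a : 'I_n -> K),
    (forall i, X (x i)) /\ \sum_(i < n) a i = 1 /\ y = \sum_(i < n) a i *: x i.

(* ball { x | nu(x - c) > r }, where nu(v) = min_i nu(v_i); since nu(v) > r
   iff every coordinate has valuation > r, this is written coordinatewise *)
Definition vball (K : fieldType) (G : zmodType) (lt : rel G)
    (nu : K -> option G) (d : nat) (c : 'rV[K]_d) (r : G) (x : 'rV[K]_d) : Prop :=
  forall i : 'I_d, ltv lt r (nu (x 0 i - c 0 i)).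

Definition vopen (K : fieldType) (G : zmodType) (lt : rel G)
    (nu : K -> option G) (d : nat) (U : 'rV[K]_d -> Prop) : Prop :=
  forall x, U x -> exists r : G, forall y, vball lt nu x r y -> U y.

Definition vclosed (K : fieldType) (G : zmodType) (lt : rel G)
    (nu : K -> option G) (d : nat) (F : 'rV[K]_d -> Prop) : Prop :=
  vopen lt nu (fun x => ~ F x).

Definition vopen_in (K : fieldType) (G : zmodType) (lt : rel G)
    (nu : K -> option G) (d : nat) (A V : 'rV[K]_d -> Prop) : Prop :=
  (forall x, V x -> A x) /\
  exists U, vopen lt nu U /\ forall x, V x <-> (U x /\ A x).

(* Let C be convex and c0 in C.  Then C - c0 is an O-submodule of K^d:
   a *: (c0 + v) + (c0 + w) - a *: c0 is an O-combination of three points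
   of C with coefficients a, 1, -a summing to 1.  Choosing a family of
   vectors of C - c0 of maximal rank gives a matrix B whose row space V
   contains C - c0 (and hence aff(C) - c0), and whose rows lie in C - c0.
   Writing v in V as u *m B with u = v *m pinvmx B, and using that the
   linear map pinvmx B is continuous, all v in V close enough to 0 have
   coordinates u in O, hence lie in the O-module C - c0.  Translating,
   C contains a uniform neighbourhood (in c + V) of each of its points c,
   which yields both relative openness and closedness inside c0 + V; the
   affine subspace c0 + V itself is closed, as points outside it are
   separated by a nonzero coordinate of the continuous map cokermx B. *)
From mathcomp Require Import all_boot all_order all_algebra.
From Stdlib Require Import Classical.
Set Implicit Arguments. Unset Strict Implicit. Unset Printing Implicit Defensive.
Import GRing.Theory.
Local Open Scope ring_scope.

Section OrderedGroup.
Variables (G : zmodType) (lt : rel G).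
Hypothesis og : ordered_group lt.

Lemma ltv_leo r a b : ltv lt r a -> leo lt a b -> ltv lt r b.
Proof.
case: a => [x|]; case: b => [y|] //= h /orP[/eqP<-//|].
exact: og_trans.
Qed.

Lemma double_eq0 (h : G) : h + h = 0 -> h = 0.
Proof.
move=> hh; case: (og_total og h 0) => [l|//|l]; have := og_add og h l;
  rewrite hh add0r => l2.
- by have := og_irr og h; rewrite (og_trans og l l2).
- by have := og_irr og 0; rewrite (og_trans og l l2).
Qed.

Lemma finite_upper_bound (T : finType) (f : T -> G) :
  exists r, forall x, (f x == r) || lt (f x) r.
Proof.
have seq_bound (s : seq G) : exists r, forall x, x \in s -> (x == r) || lt x r.
  elim: s => [|a s [r IH]]; first by exists 0.
  case: (og_total og a r) => [l|e|l].
  - by exists r => x; rewrite in_cons => /orP[/eqP->|/IH//]; rewrite l orbT.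
  - by exists r => x; rewrite in_cons => /orP[/eqP->|/IH//]; rewrite e eqxx.
  - exists a => x; rewrite in_cons => /orP[->//|/IH/orP[/eqP->|h]].
      by rewrite l orbT.
    by rewrite (og_trans og h l) orbT.
have [r Hr] := seq_bound (map f (enum T)).
by exists r => x; apply: Hr; rewrite map_f ?mem_enum.
Qed.

End OrderedGroup.

Lemma ltv0_vring (K : fieldType) (G : zmodType) (lt : rel G)
    (nu : K -> option G) (a : K) :
  ltv lt 0 (nu a) -> vring lt nu a.
Proof. by rewrite /vring; case: (nu a) => //= y ->; rewrite orbT. Qed.

Section Valuation.
Variables (K : fieldType) (G : zmodType) (lt : rel G) (nu : K -> option G).
Hypothesis hv : valuation lt nu.
Let og : ordered_group lt := val_group hv.

Lemma nu0 : nu 0 = None.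
Proof. exact/(val_inf hv). Qed.

Lemma nu1 : nu 1 = Some 0.
Proof.
case e: (nu 1) => [g|]; last by have /eqP := proj1 (val_inf hv 1) e; rewrite oner_eq0.
have := val_mul hv 1 1; rewrite mulr1 e /= => -[] gg.
by congr Some; apply: (addrI g); rewrite -gg addr0.
Qed.

(* nu(-x) = nu(x), since nu(-1) + nu(-1) = nu(1) = 0. *)
Lemma nuN x : nu (- x) = nu x.
Proof.
have nuN1 : nu (-1) = Some 0.
  case e: (nu (-1)) => [g|]; last first.
    by have /eqP := proj1 (val_inf hv (-1)) e; rewrite oppr_eq0 oner_eq0.
  have := val_mul hv (-1) (-1); rewrite mulrNN mulr1 nu1 e /= => -[] gg.
  by rewrite (double_eq0 og (esym gg)).
by rewrite -mulN1r (val_mul hv) nuN1; case: (nu x) => //= y; rewrite add0r.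
Qed.

Lemma ltv_add r x y : ltv lt r (nu x) -> ltv lt r (nu y) -> ltv lt r (nu (x + y)).
Proof.
move=> hx hy; case/orP: (val_add hv x y) => h; [exact: ltv_leo hx h|exact: ltv_leo hy h].
Qed.

Lemma ltv_sum r n (F : 'I_n -> K) :
  (forall i, ltv lt r (nu (F i))) -> ltv lt r (nu (\sum_(i < n) F i)).
Proof.
move=> hF; apply: (big_ind (fun v => ltv lt r (nu v))) => //; first by rewrite nu0.
exact: ltv_add.
Qed.

Lemma vring1 : vring lt nu 1.
Proof. by rewrite /vring nu1 /= eqxx. Qed.

Lemma vringN x : vring lt nu x -> vring lt nu (- x).
Proof. by rewrite /vring nuN. Qed.

Lemma vballE d (c y : 'rV[K]_d) r :
  vball lt nu c r y <-> forall i, ltv lt r (nu ((y - c) 0 i)).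
Proof. by split=> h i; move: (h i); rewrite !mxE. Qed.

Lemma vball_refl d (c : 'rV[K]_d) r : vball lt nu c r c.
Proof. by move=> i; rewrite subrr nu0. Qed.

Lemma vball_sym d (c y : 'rV[K]_d) r : vball lt nu c r y -> vball lt nu y r c.
Proof. by move=> h i; rewrite -opprB nuN. Qed.

Lemma vball_trans d (c y z : 'rV[K]_d) r :
  vball lt nu c r y -> vball lt nu y r z -> vball lt nu c r z.
Proof.
by move=> hy hz i; rewrite -[z 0 i](subrK (y 0 i)) -addrA; apply: ltv_add.
Qed.

Lemma mulmx_small m n (P : 'M[K]_(m, n)) (t : G) :
  exists r, forall v : 'rV_m, (forall i, ltv lt r (nu (v 0 i))) ->
    forall j, ltv lt t (nu ((v *m P) 0 j)).
Proof.
have [r Hr] := finite_upper_bound og (fun p : 'I_m * 'I_n =>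
  if nu (P p.1 p.2) is Some g then t - g else 0).
exists r => v hvi j; rewrite mxE; apply: ltv_sum => i.
rewrite (val_mul hv); have := hvi i; have := Hr (i, j) => /=.
case: (nu (v 0 i)) => [a|//]; case: (nu (P i j)) => [g|//] /= hle hra.
have l : lt (t - g) a by case/orP: hle => [/eqP->//|h]; exact: og_trans h hra.
by have := og_add og g l; rewrite subrK.
Qed.

(* An affine subspace c0 + <B> is closed: a point outside it has a nonzero
   coordinate under cokermx B, which stays fixed on a small ball. *)
Lemma affine_subspace_closed d m (B : 'M[K]_(m, d)) (c0 x : 'rV[K]_d) :
  ~~ (x - c0 <= B)%MS ->
  exists r, forall y, vball lt nu x r y -> ~~ (y - c0 <= B)%MS.
Proof.
rewrite submxE => /rV0Pn[j hj].
case e: (nu (((x - c0) *m cokermx B) 0 j)) => [g|]; last first.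
  by move: hj; rewrite (proj1 (val_inf hv _) e) eqxx.
have [r Hr] := mulmx_small (cokermx B) g.
exists r => y /vballE hy; rewrite submxE; apply/negP => /eqP/rowP/(_ j).
have -> : y - c0 = (x - c0) + (y - x) by rewrite [(x - c0) + _]addrC addrA subrK.
rewrite mulmxDl mxE [RHS]mxE => /eqP; rewrite addrC addr_eq0 => /eqP ej.
have := Hr _ hy j; rewrite ej nuN e /=.
by rewrite (negbTE (og_irr og g)).
Qed.

End Valuation.

Lemma bounded_max (P : nat -> Prop) m :
  P 0%N -> (forall k, P k -> (k <= m)%N) ->
  exists k, P k /\ forall j, P j -> (j <= k)%N.
Proof.
elim: m => [|m IH] P0 Pb; first by exists 0%N; split.
case: (classic (P m.+1)) => [Pm|nPm]; first by exists m.+1.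
apply: IH => // k Pk; rewrite -ltnS ltn_neqAle Pb // andbT.
by apply: contraPneq nPm => <-.
Qed.

(* Any set S of row vectors is spanned by finitely many of its elements:
   take a family of vectors of S of maximal rank. *)
Lemma spanning_rows (K : fieldType) d (S : 'rV[K]_d -> Prop) :
  exists n (B : 'M_(n, d)), (forall i, S (row i B)) /\
    forall v, S v -> (v <= B)%MS.
Proof.
pose P k := exists n (B : 'M[K]_(n, d)), (forall i, S (row i B)) /\ \rank B = k.
have P0 : P 0%N by exists 0%N, 0; split=> [[]//|]; rewrite mxrank0.
have [k [[n [B [SB rB]]] kmax]] :
    exists k, P k /\ forall j, P j -> (j <= k)%N.
  by apply: (bounded_max (m := d)) P0 _ => k [n [B [_ <-]]]; exact: rank_leq_col.
exists n, B; split=> // v Sv; apply/negPn/negP => vB.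
have ltB : (B < col_mx B v)%MS.
  have := submx_refl (col_mx B v); rewrite col_mx_sub => /andP[Bsub _].
  by rewrite ltmxE Bsub col_mx_sub submx_refl.
have : P (\rank (col_mx B v)).
  exists (n + 1)%N, (col_mx B v); split=> // i.
  rewrite -(splitK i); case: (split i) => j /=; first by rewrite rowKu.
  by rewrite rowKd (ord1 j) row_id.
by move/kmax; rewrite -rB leqNgt rank_ltmx.
Qed.

Lemma aff_self (K : fieldType) d (X : 'rV[K]_d -> Prop) y : X y -> aff X y.
Proof. by exists 1%N, (fun=> y), (fun=> 1); rewrite !big_ord1 scale1r. Qed.

Section Convex.
Variables (K : fieldType) (G : zmodType) (lt : rel G) (nu : K -> option G).
Hypothesis hv : valuation lt nu.
Variables (d : nat) (C : 'rV[K]_d -> Prop).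
Hypothesis hC : vconvex lt nu C.

Lemma convex_comb3 a x y z :
  vring lt nu a -> C x -> C y -> C z -> C (a *: x + y - a *: z).
Proof.
move=> Oa Cx Cy Cz.
pose p (i : 'I_3) := match val i with 0 => x | 1 => y | _ => z end.
pose c (i : 'I_3) := match val i with 0 => a | 1 => 1 | _ => - a end.
rewrite -addrA; have := @hC 3%N p c.
rewrite !big_ord_recl !big_ord0 /p /c /= scale1r scaleNr !addr0; apply.
- by case=> -[|[|[|]]].
- by case=> -[|[|[|]]] //= _; [exact: vring1 hv|exact: vringN].
- by rewrite addrC subrK.
Qed.

Variables (c0 : 'rV[K]_d) (n : nat) (B : 'M[K]_(n, d)).
Hypothesis Cc0 : C c0.
Hypothesis CB : forall i, C (c0 + row i B).
Hypothesis spanB : forall c, C c -> (c - c0 <= B)%MS.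

(* C - c0 is an O-module, so it contains every O-combination of the rows of B. *)
Lemma convex_vring_span (u : 'rV[K]_n) :
  (forall j, vring lt nu (u 0 j)) -> C (c0 + u *m B).
Proof.
move=> Ou; rewrite mulmx_sum_row.
apply: (big_ind (fun v => C (c0 + v))); first by rewrite addr0.
  move=> v w Cv Cw; have := convex_comb3 (vring1 hv) Cv Cw Cc0.
  by rewrite !scale1r addrC addrA addKr addrCA.
move=> j _; have := convex_comb3 (Ou j) (CB j) Cc0 Cc0.
by rewrite scalerDr addrC addrA addKr addrC.
Qed.

Lemma aff_span y : aff C y -> (y - c0 <= B)%MS.
Proof.
move=> [m [x [a [Cx [suma ->]]]]].
have -> : \sum_(i < m) a i *: x i - c0 = \sum_(i < m) a i *: (x i - c0).
  rewrite -[X in _ - X = _]scale1r -suma scaler_suml -sumrB.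
  by apply: eq_bigr => i _; rewrite scalerBr.
by apply: summx_sub => i _; apply/scalemx_sub/spanB.
Qed.

Lemma convex_uniform_nbhd :
  exists r0, forall c y, C c -> (y - c <= B)%MS -> vball lt nu c r0 y -> C y.
Proof.
have [r0 Hr0] := mulmx_small hv (pinvmx B) 0.
exists r0 => c y Cc yB /vballE yc.
have Cz : C (c0 + (y - c)).
  rewrite -(mulmxKpV yB); apply: convex_vring_span => j.
  exact/ltv0_vring/Hr0.
have := convex_comb3 (vring1 hv) Cz Cc Cc0.
by rewrite !scale1r addrC addrA addKr subrK.
Qed.

Lemma span_translate c y : C c -> (y - c0 <= B)%MS -> (y - c <= B)%MS.
Proof.
move=> Cc yB; have -> : y - c = (y - c0) - (c - c0) by rewrite opprB addrA subrK.
by rewrite addmx_sub // -scaleN1r scalemx_sub // spanB.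
Qed.

(* C is open in its affine span: it is the trace on aff C of the open union
   of the balls of radius r0 centred in C. *)
Lemma convex_open_in_aff : vopen_in lt nu (aff C) C.
Proof.
have [r0 Hr0] := convex_uniform_nbhd.
split; first exact: aff_self.
exists (fun y => exists2 c, C c & vball lt nu c r0 y); split.
  move=> y [c Cc cy]; exists r0 => z yz.
  by exists c => //; exact: (vball_trans hv cy yz).
move=> y; split=> [Cy|[[c Cc cy] /aff_span yB]]; last first.
  by apply: (Hr0 c) => //; exact: span_translate.
by split; [exists y => //; exact: (vball_refl hv)|exact: aff_self].
Qed.

(* C is closed: outside c0 + <B> use that affine subspaces are closed;
   inside it, a point of C within r0 of x would force x into C. *)
Lemma convex_closed : vclosed lt nu C.
Proof.
have [r0 Hr0] := convex_uniform_nbhd.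
move=> x nCx; have [xB|xnB] := boolP (x - c0 <= B)%MS.
  exists r0 => y xy Cy; apply: nCx; apply: (Hr0 y) => //.
    exact: span_translate.
  exact: (vball_sym hv xy).
have [r Hr] := affine_subspace_closed hv xnB.
by exists r => y /Hr ynB Cy; move: ynB; rewrite spanB.
Qed.

End Convex.

Theorem proposition2p15 (K : fieldType) (G : zmodType) (lt : rel G)
    (nu : K -> option G) (d : nat) (C : 'rV[K]_d -> Prop) :
  valuation lt nu -> (1 <= d)%N -> vconvex lt nu C ->
  vopen_in lt nu (aff C) C /\ vclosed lt nu C.
Proof.
move=> hv _ hC; case: (classic (exists c0, C c0)) => [[c0 Cc0]|noC]; last first.
  split; last by move=> x _; exists 0 => y _ Cy; apply: noC; exists y.
  split=> [x Cx|]; first by case: noC; exists x.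
  exists C; split=> [x Cx|x]; first by case: noC; exists x.
  by split=> [Cx|[]//]; case: noC; exists x.
have [n [B [SB spanB]]] := spanning_rows (fun v => C (c0 + v)).
have CB i : C (c0 + row i B) by exact: SB.
have spanC c : C c -> (c - c0 <= B)%MS by move=> Cc; apply: spanB; rewrite addrC subrK.
split; [exact: convex_open_in_aff CB spanC|exact: convex_closed CB spanC].
Qed.
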